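(* Let $\varepsilon\in(0,1)$. Let $M=(E,\mathcal{I})$ be a matroid, $u:E\to\mathbb{Z}_{\ge0}$ integer capacities and $k\in\mathbb{N}$. Suppose bases $B_1,\dots,B_k$ (with insertion levels) and levels $\ell:E\to\mathbb{Z}_{\ge0}$ satisfy invariants (I1)–(I3) with height $h>1/\varepsilon+2$. Then there exists a level $j$ such that $$u(E_{<j})+k\,\mathrm{rank}(E_{\ge j})\ \le\ (1+\varepsilon)\sum_{e\in E}\min\{u(e),x(e)\}.$$ Consequently $B_1,\dots,B_k$ is a $1/(1+\varepsilon)$-approximately maximum solution of the $k$-fold matroid union problem and $E_{\ge j}$ is a $(1+\varepsilon)$-approximately minimum dual solution.
   Context: For $e\in E$, $x(e)=|\{i: e\in B_i\}|$; $e$ is uncovered if $x(e)<u(e)$. $u(T)=\sum_{e\in T}u(e)$. The $k$-fold matroid union problem maximizes $\sum_e\min\{u(e),x(e)\}$ over $k$ bases; the dual minimizes $k\,\mathrm{rank}(S)+u(E\setminus S)$ over $S\subseteq E$. Each element $e\in B_i$ carries an insertion level (the value of $\ell(e)$ when $e$ was inserted into $B_i$; levels never decrease, so insertion levels are at most current levels). $E_j=\{e:\ell(e)=j\}$ and analogously $E_{<j},E_{\ge j},E_{>j}$; $B_{i,j}$ (resp. $B_{i,\ge j}$) denotes the elements of $B_i$ with insertion level $j$ (resp. at least $j$). Invariants: (I1) $\ell(e)=0$ whenever $e$ lies in strictly more than $u(e)$ bases; (I2) for all $i$ and $j$, $B_{i,\ge j}$ spans $E_{>j}$; (I3) every uncovered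 $e$ has $\ell(e)\ge h$. *)

From mathcomp Require Import all_boot all_order all_algebra.
Set Implicit Arguments. Unset Strict Implicit. Unset Printing Implicit Defensive.
Import Order.TTheory GRing.Theory Num.Theory.

Definition is_matroid (T : finType) (indep : {set T} -> bool) : Prop :=
  [/\ indep set0,
      (forall I J : {set T}, J \subset I -> indep I -> indep J) &
      (forall I J : {set T}, indep I -> indep J -> #|I| < #|J| ->
         exists2 x, x \in J :\: I & indep (x |: I))].

Definition mrank (T : finType) (indep : {set T} -> bool) (S : {set T}) : nat :=
  \max_(I : {set T} | indep I && (I \subset S)) #|I|.

Definition is_basis (T : finType) (indep : {set T} -> bool) (B : {set T}) : bool :=
  indep B && [forall e, (e \notin B) ==> ~~ indep (e |: B)].

Definition mclosure (T : finType) (indep : {set T} -> bool) (A : {set T}) : {set T} :=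
  [set e | mrank indep (e |: A) == mrank indep A].

Definition spans (T : finType) (indep : {set T} -> bool) (A X : {set T}) : bool :=
  X \subset mclosure indep A.

Definition xcount (T : finType) (k : nat) (B : 'I_k -> {set T}) (e : T) : nat :=
  #|[set i | e \in B i]|.

Definition usum (T : finType) (u : T -> nat) (S : {set T}) : nat :=
  \sum_(e in S) u e.

Definition union_value (T : finType) (k : nat) (u : T -> nat)
  (B : 'I_k -> {set T}) : nat :=
  \sum_(e : T) minn (u e) (xcount B e).

Definition dual_value (T : finType) (indep : {set T} -> bool) (k : nat)
  (u : T -> nat) (S : {set T}) : nat :=
  k * mrank indep S + usum u (~: S).

Definition Elt (T : finType) (l : T -> nat) (j : nat) : {set T} := [set e | l e < j].
Definition Ege (T : finType) (l : T -> nat) (j : nat) : {set T} := [set e | j <= l e].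
Definition Egt (T : finType) (l : T -> nat) (j : nat) : {set T} := [set e | j < l e].

Definition Bge (T : finType) (k : nat) (B : 'I_k -> {set T})
  (ins : 'I_k -> T -> nat) (i : 'I_k) (j : nat) : {set T} :=
  [set e in B i | j <= ins i e].

Definition inv_I1 (T : finType) (k : nat) (u : T -> nat) (B : 'I_k -> {set T})
  (l : T -> nat) : Prop :=
  forall e, u e < xcount B e -> l e = 0.

Definition inv_I2 (T : finType) (indep : {set T} -> bool) (k : nat)
  (B : 'I_k -> {set T}) (ins : 'I_k -> T -> nat) (l : T -> nat) : Prop :=
  forall (i : 'I_k) (j : nat), spans indep (Bge B ins i j) (Egt l j).

Definition inv_I3 (T : finType) (k : nat) (u : T -> nat) (B : 'I_k -> {set T})
  (l : T -> nat) (h : nat) : Prop :=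
  forall e, xcount B e < u e -> h <= l e.

From mathcomp Require Import all_boot all_order all_algebra.
From mathcomp Require Import zify lra.
Import Order.TTheory GRing.Theory Num.Theory.
Set Implicit Arguments. Unset Strict Implicit.

(* Write [m e = min (u e, x e)] and [layer_value t] for the sum of [m] over the level [t].
   Below level [h] every element is saturated by (I3), and above level [0] no element
   is over-covered by (I1).  For [0 < t < h], (I2) lets each [B_{i,>=t}] span [E_{>t}],
   so [k rank(E_{>t}) <= sum_i |B_{i,>=t}| <= sum_(l e >= t) m e]; hence the dual value
   of [E_{>t}] exceeds the primal value by at most [layer_value t].  The levels
   [1, ..., h-1] are disjoint, so one of them carries at most a [1/(h-1) <= eps]
   fraction of the primal value.  Weak duality turns this into both guarantees. *)

Section Matroid.

Variables (T : finType) (indep : {set T} -> bool).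

Lemma card_leq_mrank (I S : {set T}) :
  indep I -> I \subset S -> (#|I| <= mrank indep S)%N.
Proof.
by move=> indI sIS; apply: (leq_bigmax_cond (F := fun I : {set T} => #|I|)); rewrite indI sIS.
Qed.

Lemma mrank_leq_card (A : {set T}) : (mrank indep A <= #|A|)%N.
Proof. by apply/bigmax_leqP => I /andP[_ sIA]; exact: subset_leq_card. Qed.

Hypothesis matroid_indep : is_matroid indep.

Lemma basis_indep_subset (B A : {set T}) :
  is_basis indep B -> A \subset B -> indep A.
Proof. by case: matroid_indep => _ hered _ /andP[indB _] sAB; exact: hered indB. Qed.

(* An independent subset of [X] larger than [A] would augment [A] by an element of [X]
   outside the closure of [A]. *)
Lemma mrank_leq_card_spanning (A X : {set T}) :
  indep A -> spans indep A X -> (mrank indep X <= #|A|)%N.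
Proof.
case: matroid_indep => _ _ augment indA spanAX.
apply/bigmax_leqP => I /andP[indI sIX]; rewrite leqNgt; apply/negP => ltAI.
have [x /setDP[xI xNA] indxA] := augment A I indA indI ltAI.
have : x \in mclosure indep A by apply: (subsetP spanAX); exact: subsetP sIX x xI.
rewrite inE => /eqP rank_xA.
have := card_leq_mrank indxA (subxx _).
by rewrite rank_xA cardsU1 xNA add1n ltnNge mrank_leq_card.
Qed.

End Matroid.

Lemma sum_xcount (T : finType) (k : nat) (F : 'I_k -> {set T}) (P : pred T) :
  (\sum_(e | P e) xcount F e = \sum_i #|[set e in F i | P e]|)%N.
Proof.
under eq_bigr do rewrite /xcount -sum1_card.
rewrite (exchange_big_dep xpredT) //=.
by apply: eq_bigr => i _; rewrite -sum1_card; apply: eq_bigl => e; rewrite !inE andbC.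
Qed.

Lemma weak_duality (T : finType) (indep : {set T} -> bool) (k : nat)
    (u : T -> nat) (B : 'I_k -> {set T}) (S : {set T}) :
  is_matroid indep -> (forall i, is_basis indep (B i)) ->
  (union_value u B <= dual_value indep k u S)%N.
Proof.
move=> matroid_indep basisB.
rewrite /union_value /dual_value /usum (bigID (mem S)) /=.
apply: leq_add.
- apply: (@leq_trans (\sum_(e in S) xcount B e)).
    by apply: leq_sum => e _; exact: geq_minr.
  rewrite sum_xcount -[X in (X * _)%N]card_ord -sum_nat_const leq_sum // => i _.
  apply: card_leq_mrank; last by apply/subsetP => e; rewrite inE => /andP[].
  by apply: (basis_indep_subset matroid_indep (basisB i)); rewrite setIdE subsetIl.
- rewrite (eq_bigl (fun e => e \in ~: S)) => [|e]; last by rewrite inE.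
  by apply: leq_sum => e _; exact: geq_minl.
Qed.

Lemma dual_value_Ege (T : finType) (indep : {set T} -> bool) (k : nat)
    (u : T -> nat) (l : T -> nat) (j : nat) :
  dual_value indep k u (Ege l j) = (usum u (Elt l j) + k * mrank indep (Ege l j))%N.
Proof.
rewrite /dual_value addnC /usum; congr (_ + _).
by apply: eq_bigl => e; rewrite !inE -ltnNge.
Qed.

Lemma exists_mul_leq_sum (n P : nat) (g : 'I_n -> nat) :
  (0 < n)%N -> (\sum_(i < n) g i <= P)%N -> exists i : 'I_n, (n * g i <= P)%N.
Proof.
case: n g => // n g _ sum_leP.
case: (arg_minnP g (isT : predT (ord0 : 'I_n.+1))) => i _ g_min.
exists i; apply: leq_trans sum_leP.
by rewrite -[X in (X * _)%N]card_ord -sum_nat_const leq_sum.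
Qed.

Section Levels.

Variables (T : finType) (indep : {set T} -> bool) (u : T -> nat) (k : nat).
Variables (B : 'I_k -> {set T}) (ins : 'I_k -> T -> nat) (l : T -> nat) (h : nat).
Hypotheses (matroid_indep : is_matroid indep) (basisB : forall i, is_basis indep (B i)).
Hypothesis ins_leq_level : forall i e, e \in B i -> (ins i e <= l e)%N.
Hypotheses (I1 : inv_I1 u B l) (I2 : inv_I2 indep B ins l) (I3 : inv_I3 u B l h).

Let m e := minn (u e) (xcount B e).

Definition layer_value (t : nat) : nat := \sum_(e | l e == t) m e.

Lemma usum_Elt (j : nat) : (j <= h)%N -> usum u (Elt l j) = (\sum_(e | l e < j) m e)%N.
Proof.
move=> le_jh; apply: eq_big => [e|e]; first by rewrite inE.
rewrite inE => lt_ej; apply/esym/minn_idPl; rewrite leqNgt.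
by apply/negP => /I3; lia.
Qed.

Lemma mrank_Ege_leq (t : nat) :
  (0 < t)%N -> (k * mrank indep (Ege l t.+1) <= \sum_(e | t <= l e) m e)%N.
Proof.
move=> t_gt0.
have span_bound i : (mrank indep (Ege l t.+1) <= #|[set e in B i | t <= l e]|)%N.
  apply: leq_trans (mrank_leq_card_spanning matroid_indep _ (I2 i t)) _.
    by apply: (basis_indep_subset matroid_indep (basisB i)); rewrite /Bge setIdE subsetIl.
  apply: subset_leq_card; apply/subsetP => e; rewrite !inE => /andP[eBi le_t_ins].
  by rewrite eBi (leq_trans le_t_ins) ?ins_leq_level.
apply: (@leq_trans (\sum_(e | t <= l e) xcount B e)).
  by rewrite sum_xcount -[X in (X * _)%N]card_ord -sum_nat_const leq_sum.
apply: eq_leq; apply: eq_bigr => e le_t_e; apply/esym/minn_idPr.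
by rewrite leqNgt; apply/negP => /I1; lia.
Qed.

Lemma dual_Ege_leq (t : nat) : (0 < t)%N -> (t < h)%N ->
  (dual_value indep k u (Ege l t.+1) <= union_value u B + layer_value t)%N.
Proof.
move=> t_gt0 lt_th.
have split_union : union_value u B = (\sum_(e | l e < t) m e + \sum_(e | t <= l e) m e)%N.
  rewrite /union_value (bigID (fun e => l e < t)) /=.
  by apply: f_equal2 => //; apply: eq_bigl => e; rewrite -leqNgt.
have split_lt : (\sum_(e | l e < t.+1) m e = \sum_(e | l e < t) m e + layer_value t)%N.
  by rewrite (bigID (fun e => l e < t)) /=; congr (_ + _); apply: eq_bigl => e; lia.
rewrite dual_value_Ege usum_Elt // split_lt split_union.
have := mrank_Ege_leq t_gt0; lia.
Qed.

Lemma sum_layer_value_leq : (\sum_(t < h) layer_value t <= union_value u B)%N.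
Proof.
have -> : (\sum_(t < h) layer_value t = \sum_(e | l e < h) m e)%N.
  elim: h => [|n IH]; first by rewrite big_ord0 big_pred0.
  rewrite big_ord_recr /= IH (bigID (fun e => l e < n) (fun e => l e < n.+1)) /=.
  by congr (_ + _); apply: eq_bigl => e; lia.
by rewrite /union_value [X in (_ <= X)%N](bigID (fun e => l e < h)) leq_addr.
Qed.

Lemma exists_thin_layer : (1 < h)%N ->
  exists t, [/\ (0 < t)%N, (t < h)%N & (h.-1 * layer_value t <= union_value u B)%N].
Proof.
case: h sum_layer_value_leq => // n sum_leq lt1n.
have sum_shift : (\sum_(t < n) layer_value t.+1 <= union_value u B)%N.
  by apply: leq_trans sum_leq; rewrite big_ord_recl leq_addl.
have [t thin] := exists_mul_leq_sum lt1n sum_shift.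
by exists t.+1; split; rewrite // ltnS.
Qed.

End Levels.

Local Open Scope ring_scope.

Lemma approx_of_thin_layer (R : realFieldType) (eps : R) (n D P G : nat) :
  0 < eps -> eps^-1 <= n%:R -> (n * G <= P)%N -> (D <= P + G)%N ->
  D%:R <= (1 + eps) * P%:R.
Proof.
move=> eps_gt0 inv_eps_le; rewrite -(ler_nat R) -(ler_nat R) natrM natrD => nG_le D_le.
have eps_n : 1 <= eps * n%:R by rewrite -ler_pdivrMl // mulr1.
have : G%:R <= eps * P%:R :> R.
  apply: le_trans (ler_wpM2l (ltW eps_gt0) nG_le).
  by rewrite mulrA -[X in X <= _]mul1r ler_wpM2r.
lra.
Qed.

Theorem mainTheorem3 (R : realFieldType) (eps : R) (T : finType)
  (indep : {set T} -> bool) (u : T -> nat) (k : nat)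
  (B : 'I_k -> {set T}) (ins : 'I_k -> T -> nat) (l : T -> nat) (h : nat) :
  0 < eps < 1 ->
  is_matroid indep ->
  (forall i, is_basis indep (B i)) ->
  (forall i e, e \in B i -> (ins i e <= l e)%N) ->
  inv_I1 u B l ->
  inv_I2 indep B ins l ->
  inv_I3 u B l h ->
  eps^-1 + 2 < h%:R ->
  exists j : nat,
    [/\ (usum u (Elt l j) + k * mrank indep (Ege l j))%:R
          <= (1 + eps) * (union_value u B)%:R,
        (forall B' : 'I_k -> {set T}, (forall i, is_basis indep (B' i)) ->
           (union_value u B')%:R <= (1 + eps) * (union_value u B)%:R) &
        (forall S : {set T},
           (dual_value indep k u (Ege l j))%:R
             <= (1 + eps) * (dual_value indep k u S)%:R)].
Proof.
move=> /andP[eps_gt0 _] matroid_indep basisB ins_le I1 I2 I3 h_large.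
have inv_eps_gt0 : 0 < eps^-1 by rewrite invr_gt0.
have lt1h : (1 < h)%N by rewrite -(ltr_nat R); lra.
have [t [t_gt0 lt_th thin]] := exists_thin_layer u B l lt1h.
have inv_eps_le : eps^-1 <= (h.-1)%:R.
  by rewrite -subn1 natrB ?(ltnW lt1h) //; lra.
have dual_le := approx_of_thin_layer eps_gt0 inv_eps_le thin
  (dual_Ege_leq matroid_indep basisB ins_le I1 I2 I3 t_gt0 lt_th).
exists t.+1; split; rewrite -?dual_value_Ege //.
- move=> B' basisB'; apply: le_trans dual_le.
  by rewrite ler_nat weak_duality.
- move=> S; apply: le_trans dual_le _.
  by rewrite ler_wpM2l ?ler_nat ?weak_duality //; lra.
Qed.
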